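(* Let $\chi:\mathcal H\to\mathcal H_L^\chi\otimes\mathcal H_R^\chi$ be a lean splitting map and $\mathcal A=\mathrm{stloc}_L(\chi)$. Then there exist a canonical splitting map $\zeta:\mathcal H\to\mathcal H_L\otimes\mathcal H_R$ for $\mathcal A$ and isometries $U_L:\mathcal H_L\to\mathcal H_L^\chi$ and $U_R:\mathcal H_R\to\mathcal H_R^\chi$ such that $\chi=(U_L\otimes U_R)\zeta$.
   Context: All Hilbert spaces are finite-dimensional and complex. A splitting map on $\mathcal H$ is an isometry $\chi:\mathcal H\to\mathcal H_L^\chi\otimes\mathcal H_R^\chi$; $\pi^\chi=\chi\chi^\dagger$. $B\in\mathcal L(\mathcal H_L^\chi)$ is left $\chi$-consistent if $\pi^\chi(B\otimes\mathbb 1)=(B\otimes\mathbb 1)\pi^\chi$ (set $\mathrm{cons}_L(\chi)$); $A\in\mathcal L(\mathcal H)$ is strictly left $\chi$-local if there is $\tilde A\in\mathcal L(\mathcal H_L^\chi)$ with $A\chi^\dagger=\chi^\dagger(\tilde A\otimes\mathbb 1)$ and $\chi A=(\tilde A\otimes\mathbb 1)\chi$ (set $\mathrm{stloc}_L(\chi)$). Right versions $\mathrm{cons}_R(\chi)$, $\mathrm{stloc}_R(\chi)$ are defined symmetrically on $\mathcal H_R^\chi$. $\chi$ is balanced if $\mathrm{stloc}_R(\chi)=\mathrm{stloc}_L(\chi)'$, and lean if it is balanced and $\mathrm{cons}_L(\chi)'=\mathcal Z(\mathrm{cons}_L(\chi))$ (commutant and centre taken in $\mathcal L(\mathcal H_L^\chi)$)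 and $\mathrm{cons}_R(\chi)'=\mathcal Z(\mathrm{cons}_R(\chi))$ (in $\mathcal L(\mathcal H_R^\chi)$). A representation unitary for a Von Neumann algebra $\mathcal A\subseteq\mathcal L(\mathcal H)$ is a unitary $U:\mathcal H\to\bigoplus_i(\mathcal H_L^i\otimes\mathcal H_R^i)$ with $U\mathcal AU^\dagger=\bigoplus_i\mathcal L(\mathcal H_L^i)\otimes\mathbb 1_{\mathcal H_R^i}$; a canonical splitting map for $\mathcal A$ is $x\mapsto Ux$ followed by the natural inclusion into $(\bigoplus_i\mathcal H_L^i)\otimes(\bigoplus_i\mathcal H_R^i)$, for such a $U$. *)

(* Finite-dimensional complex Hilbert spaces are modelled as
   C^I (standard inner product) for a finite index type I, with C = R[i] the
   complex numbers over a real type R.  A linear map C^J -> C^I is a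
   function  I -> J -> C  (its matrix), composed by matrix product. *)
From HB Require Import structures.
From mathcomp Require Import all_boot all_algebra.
From mathcomp Require Import reals complex.
Set Implicit Arguments. Unset Strict Implicit. Unset Printing Implicit Defensive.
Import GRing.Theory Num.Theory.
Local Open Scope ring_scope.

Section Ops.
Variable R : realType.
Notation C := (R[i]).

Definition op (I J : finType) := I -> J -> C.

Definition opmul (I J K : finType) (A : op I J) (B : op J K) : op I K :=
  fun i k => \sum_(j : J) A i j * B j k.

Definition opadj (I J : finType) (A : op I J) : op J I :=
  fun j i => (A i j)^*.

Definition opid (I : finType) : op I I := fun i j => (i == j)%:R.

(* tensor product of linear maps, C^(I*K) = C^I (x) C^K *)
Definition optens (I J K L : finType) (A : op I J) (B : op K L) : op (I * K)%type (J * L)%type :=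
  fun p q => A p.1 q.1 * B p.2 q.2.

Definition is_isometry (I J : finType) (V : op I J) : Prop :=
  opmul (opadj V) V = @opid J.

Definition is_unitary (I J : finType) (V : op I J) : Prop :=
  opmul (opadj V) V = @opid J /\ opmul V (opadj V) = @opid I.

Definition opset (I : finType) := op I I -> Prop.

Definition commutant (I : finType) (S : opset I) : opset I :=
  fun B => forall A, S A -> opmul A B = opmul B A.

Definition centre (I : finType) (S : opset I) : opset I :=
  fun B => S B /\ commutant S B.

Definition seteq (I : finType) (S T : opset I) : Prop := forall A, S A <-> T A.

Section Splitting.
Variables (IH IL IR : finType).

Definition splitting_map (chi : op (IL * IR)%type IH) : Prop := is_isometry chi.

Definition proj_chi (chi : op (IL * IR)%type IH) : op (IL * IR)%type (IL * IR)%type :=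
  opmul chi (opadj chi).

Definition consL (chi : op (IL * IR)%type IH) : opset IL :=
  fun B => opmul (proj_chi chi) (optens B (@opid IR))
           = opmul (optens B (@opid IR)) (proj_chi chi).

Definition consR (chi : op (IL * IR)%type IH) : opset IR :=
  fun B => opmul (proj_chi chi) (optens (@opid IL) B)
           = opmul (optens (@opid IL) B) (proj_chi chi).

Definition stlocL (chi : op (IL * IR)%type IH) : opset IH :=
  fun A => exists At : op IL IL,
    opmul A (opadj chi) = opmul (opadj chi) (optens At (@opid IR)) /\
    opmul chi A = opmul (optens At (@opid IR)) chi.

Definition stlocR (chi : op (IL * IR)%type IH) : opset IH :=
  fun A => exists At : op IR IR,
    opmul A (opadj chi) = opmul (opadj chi) (optens (@opid IL) At) /\
    opmul chi A = opmul (optens (@opid IL) At) chi.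

Definition balanced (chi : op (IL * IR)%type IH) : Prop :=
  seteq (stlocR chi) (commutant (stlocL chi)).

Definition lean (chi : op (IL * IR)%type IH) : Prop :=
  [/\ balanced chi,
      seteq (commutant (consL chi)) (centre (consL chi)) &
      seteq (commutant (consR chi)) (centre (consR chi))].
End Splitting.

(* A family of pairs (H_L^k, H_R^k), k : K, is encoded by
   finite index types JL, JR with labellings fL : JL -> K, fR : JR -> K:
   H_L^k = C^{fL^-1 k},  (+)_k H_L^k = C^JL, and likewise for R.  Then
   (+)_k (H_L^k (x) H_R^k) = C^(blk fL fR), where blk fL fR is the set of
   pairs (jl, jr) with fL jl = fR jr; its natural inclusion into
   ((+)_k H_L^k) (x) ((+)_k H_R^k) = C^(JL * JR)%type is the map [incl]. *)
Section DirectSum.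
Variables (K JL JR : finType) (fL : JL -> K) (fR : JR -> K).

Definition blk_pred : pred (JL * JR)%type := fun p => fL p.1 == fR p.2.
Definition blk : finType := {p : JL * JR | blk_pred p}.

Definition incl : op (JL * JR)%type blk := fun p b => (p == val b)%:R.

Definition nondeg_blocks : Prop :=
  forall k : K, (exists jl, fL jl = k) /\ (exists jr, fR jr = k).

Definition blockdiagL (X : op JL JL) : Prop :=
  forall j j', fL j != fL j' -> X j j' = 0.

(* (+)_k (X_k (x) 1_{H_R^k})  as an operator on C^blk *)
Definition blk_tens_id (X : op JL JL) : op blk blk :=
  fun b b' => X (val b).1 (val b').1 * ((val b).2 == (val b').2)%:R.

(* (+)_k L(H_L^k) (x) 1_{H_R^k} *)
Definition blk_algebra : opset blk :=
  fun Y => exists X, blockdiagL X /\ Y = blk_tens_id X.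

Definition representation_unitary (IH : finType) (A : opset IH) (U : op blk IH) : Prop :=
  nondeg_blocks /\ is_unitary U /\
  seteq (fun Y => exists a, A a /\ Y = opmul (opmul U a) (opadj U)) blk_algebra.
End DirectSum.

Definition canonical_splitting_map (IH JL JR : finType) (A : opset IH)
    (zeta : op (JL * JR)%type IH) : Prop :=
  exists (K : finType) (fL : JL -> K) (fR : JR -> K) (U : op (blk fL fR) IH),
    representation_unitary A U /\ zeta = opmul (incl (fL:=fL) (fR:=fR)) U.
End Ops.

(* Write pi = chi chi^*. For fixed r, s the block pi_rs = <r|pi|s> is an
   operator on H_L commuting with cons_L(chi), so by leanness it lies in the
   centre of cons_L(chi): the blocks commute, form an adjoint-closed family and
   are diagonalised by one unitary V. Likewise the blocks <a|pi|a'> on H_R are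
   diagonalised by a unitary W. In the product basis given by V (x) W the
   projection pi is diagonal, i.e. it projects onto the span of a set S of
   basis vectors, and this change of local bases changes neither stloc_L(chi)
   nor stloc_R(chi). Balancedness forces S to be a disjoint union of rectangles
   A_k x B_k. These are the blocks H_L^k (x) H_R^k of the representation of
   stloc_L(chi); the canonical splitting map is chi with its range cut down to
   the rectangles, and U_L, U_R are V, W composed with the inclusions of the
   coordinates met by S. *)

From Pilot Require Import Defs.
From HB Require Import structures.
From mathcomp Require Import all_boot all_algebra.
From mathcomp Require Import reals complex.
From mathcomp Require Import spectral.
Set Implicit Arguments. Unset Strict Implicit. Unset Printing Implicit Defensive.
Import GRing.Theory Num.Theory.
Local Open Scope ring_scope.

(* all_algebra exports an unrelated [is_unitary]. *)
Local Notation is_unitary := Defs.is_unitary.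

Section OperatorAlgebra.
Variable R : realType.
Local Notation C := (R[i]).

Lemma opext (I J : finType) (A B : op R I J) : (forall i j, A i j = B i j) -> A = B.
Proof. by move=> eqAB; apply: boolp.funext => i; apply: boolp.funext => j. Qed.

Lemma opmulA (I J K L : finType) (A : op R I J) (B : op R J K) (D : op R K L) :
  opmul (opmul A B) D = opmul A (opmul B D).
Proof.
apply: opext => i l; rewrite /opmul.
under eq_bigr do rewrite big_distrl /=.
rewrite exchange_big; apply: eq_bigr => j _; rewrite big_distrr /=.
by apply: eq_bigr => k _; rewrite mulrA.
Qed.

Lemma opmul1l (I J : finType) (A : op R I J) : opmul (@opid R I) A = A.
Proof.
apply: opext => i j; rewrite /opmul /opid (big_only1 i) ?eqxx ?mul1r // => k.
by rewrite eq_sym => /negbTE -> _; rewrite mul0r.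
Qed.

Lemma opmul1r (I J : finType) (A : op R I J) : opmul A (@opid R J) = A.
Proof.
apply: opext => i j; rewrite /opmul /opid (big_only1 j) ?eqxx ?mulr1 // => k.
by move=> /negbTE -> _; rewrite mulr0.
Qed.

Lemma opadjK (I J : finType) (A : op R I J) : opadj (opadj A) = A.
Proof. by apply: opext => i j; rewrite /opadj conjCK. Qed.

Lemma opadjM (I J K : finType) (A : op R I J) (B : op R J K) :
  opadj (opmul A B) = opmul (opadj B) (opadj A).
Proof.
apply: opext => k i; rewrite /opadj /opmul rmorph_sum /=.
by apply: eq_bigr => j _; rewrite rmorphM mulrC.
Qed.

Lemma optensM (I J K L M N : finType) (A : op R I J) (B : op R K L)
    (D : op R J M) (E : op R L N) :
  opmul (optens A B) (optens D E) = optens (opmul A D) (opmul B E).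
Proof.
apply: opext => p q; rewrite /opmul /optens big_distrl /=.
under [RHS]eq_bigr do rewrite big_distrr /=.
by rewrite pair_big /=; apply: eq_bigr => [[j l]] _ /=; rewrite mulrACA.
Qed.

Lemma optens_factorl (I J K L : finType) (A : op R I J) (B : op R K L) :
  optens A B = opmul (optens A (@opid R K)) (optens (@opid R J) B).
Proof. by rewrite optensM opmul1r opmul1l. Qed.

Lemma optens_factorr (I J K L : finType) (A : op R I J) (B : op R K L) :
  optens A B = opmul (optens (@opid R I) B) (optens A (@opid R L)).
Proof. by rewrite optensM opmul1r opmul1l. Qed.

Lemma opadj_tens (I J K L : finType) (A : op R I J) (B : op R K L) :
  opadj (optens A B) = optens (opadj A) (opadj B).
Proof. by apply: opext => p q; rewrite /opadj /optens rmorphM. Qed.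

Lemma optens1 (I K : finType) : optens (@opid R I) (@opid R K) = @opid R _.
Proof.
apply: opext => [[i k] [j l]]; rewrite /optens /opid /= xpair_eqE.
by case: (i == j); case: (k == l); rewrite ?mulr1 ?mulr0.
Qed.

Lemma isometry_mul (I J K : finType) (A : op R I J) (B : op R J K) :
  is_isometry A -> is_isometry B -> is_isometry (opmul A B).
Proof.
rewrite /is_isometry opadjM => isoA isoB.
by rewrite opmulA -(opmulA (opadj A)) isoA opmul1l.
Qed.

Lemma unitary_adj (I J : finType) (V : op R I J) :
  is_unitary V -> is_unitary (opadj V).
Proof. by case=> isoV coisoV; split; rewrite opadjK. Qed.

Lemma unitary_tens (I J K L : finType) (V : op R I J) (W : op R K L) :
  is_unitary V -> is_unitary W -> is_unitary (optens V W).
Proof.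
by case=> V1 V2 [W1 W2]; rewrite /is_unitary opadj_tens !optensM V1 V2 W1 W2 !optens1.
Qed.

Definition sub_incl (I : finType) (P : pred I) : op R I {i | P i} :=
  fun i j => (i == val j)%:R.

Lemma sub_incl_isometry (I : finType) (P : pred I) : is_isometry (@sub_incl I P).
Proof.
apply: opext => j j'; rewrite /opmul /opadj /sub_incl /opid (big_only1 (val j)) //.
  by rewrite eqxx conjC1 mul1r (inj_eq val_inj).
by move=> i /negbTE ->; rewrite conjC0 mul0r.
Qed.

Definition is_diagonal (I : finType) (A : op R I I) : Prop :=
  forall i j, i != j -> A i j = 0.

Lemma diagonal_idem_entry (I : finType) (P : op R I I) :
  is_diagonal P -> opmul P P = P -> forall i, P i i = (P i i == 1)%:R.
Proof.
move=> diagP idemP i.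
have sqPii : P i i * P i i = P i i.
  rewrite -{3}idemP /opmul (big_only1 i) // => j neq_ji _.
  by rewrite diagP ?mul0r // eq_sym.
case: eqP => [-> //| Pii_neq1]; apply/eqP.
have : P i i * (P i i - 1) = 0 by rewrite mulrBr mulr1 sqPii subrr.
by move/eqP; rewrite mulf_eq0 subr_eq0 => /orP[// | /eqP/Pii_neq1].
Qed.

Lemma sum_sub_supp (I : finType) (P : pred I) (F : I -> C) :
  (forall i, ~~ P i -> F i = 0) -> \sum_(x : {x | P x}) F (val x) = \sum_i F i.
Proof.
move=> F0; rewrite -(big_sub P) big_mkcond /=; apply: eq_bigr => i _.
by case: ifP => // /negbT /F0 ->.
Qed.

Lemma sum_pair (I J : finType) (F : I * J -> C) :
  \sum_p F p = \sum_i \sum_j F (i, j).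
Proof. by rewrite pair_big; apply: eq_bigr => [[i j]]. Qed.

End OperatorAlgebra.

Arguments sub_incl {R I} P _ _.

Section SimultaneousDiagonalization.
Local Open Scope sesquilinear_scope.
Variable R : realType.
Local Notation C := (R[i]).

Lemma mx_simultaneous_unitary_diag n (As : seq 'M[C]_n) :
  {in As &, forall A B, comm_mx A B} -> {in As, forall A, A ^t* \in As} ->
  exists2 P : 'M[C]_n, P \is unitarymx & {in As, forall A, is_diag_mx (P *m A *m P^t*)}.
Proof.
move=> commAs adjAs; have [P unitaryP /allP trigP] := cotrigonalization commAs.
exists P => [|A AsA]; first exact: unitaryP.
apply/is_diag_mxP => i j neq_ij.
have trigA := trigP A AsA; have trigAadj := trigP _ (adjAs A AsA).
rewrite /= /similar_to conjymx // in trigA.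
rewrite /= /similar_to conjymx // in trigAadj.
have adj_conj : P *m A ^t* *m P ^t* = (P *m A *m P ^t*) ^t*.
  by rewrite !trmx_mul !map_mxM trmxCK mulmxA.
rewrite adj_conj in trigAadj.
(* P A P^* and its adjoint P A^* P^* are both upper triangular. *)
case: (ltngtP i j) => [lt_ij|lt_ji|/val_inj eq_ij]; last by rewrite eq_ij eqxx in neq_ij.
- by move/is_trig_mxP: trigA => ->.
- move/is_trig_mxP: trigAadj => /(_ _ _ lt_ji); rewrite !mxE => /eqP.
  by rewrite conjC_eq0 => /eqP.
Qed.

Section MatrixOfOperator.
Variable I : finType.
Local Notation n := #|I|.

Definition mx_of_op (A : op R I I) : 'M[C]_n :=
  \matrix_(i, j) A (enum_val i) (enum_val j).
Definition op_of_mx (M : 'M[C]_n) : op R I I :=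
  fun i j => M (enum_rank i) (enum_rank j).

Lemma sum_enum_val (F : I -> C) : \sum_(k : I) F k = \sum_(k < n) F (enum_val k).
Proof. by rewrite (reindex (@enum_val I predT)) //; apply: onW_bij; exact: enum_val_bij. Qed.

Lemma mx_of_opM A B : mx_of_op (opmul A B) = mx_of_op A *m mx_of_op B.
Proof.
apply/matrixP => i j; rewrite !mxE /opmul sum_enum_val.
by apply: eq_bigr => k _; rewrite !mxE.
Qed.

Lemma mx_of_op_adj A : mx_of_op (opadj A) = (mx_of_op A)^t*.
Proof. by apply/matrixP => i j; rewrite !mxE. Qed.

Lemma op_of_mxM M N : op_of_mx (M *m N) = opmul (op_of_mx M) (op_of_mx N).
Proof.
apply: opext => i j; rewrite /op_of_mx /opmul mxE sum_enum_val.
by apply: eq_bigr => k _; rewrite enum_valK.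
Qed.

Lemma op_of_mx_adj M : op_of_mx (M^t*) = opadj (op_of_mx M).
Proof. by apply: opext => i j; rewrite /op_of_mx /opadj !mxE. Qed.

Lemma op_of_mx1 : op_of_mx 1%:M = @opid R I.
Proof. by apply: opext => i j; rewrite /op_of_mx /opid mxE (can_eq enum_rankK). Qed.

Lemma mx_of_opK : cancel mx_of_op op_of_mx.
Proof. by move=> A; apply: opext => i j; rewrite /op_of_mx mxE !enum_rankK. Qed.

End MatrixOfOperator.

Lemma simultaneous_unitary_diag (I X : finType) (F : X -> op R I I) :
  (forall x y, opmul (F x) (F y) = opmul (F y) (F x)) ->
  (forall x, exists y, opadj (F x) = F y) ->
  exists2 V : op R I I, is_unitary V &
    forall x, is_diagonal (opmul (opmul (opadj V) (F x)) V).
Proof.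
move=> commF adjF; pose As := [seq mx_of_op (F x) | x <- enum X].
have commAs : {in As &, forall A B, comm_mx A B}.
  by move=> _ _ /mapP[x _ ->] /mapP[y _ ->]; rewrite /comm_mx -!mx_of_opM commF.
have adjAs : {in As, forall A, A ^t* \in As}.
  move=> _ /mapP[x _ ->]; have [y adjFx] := adjF x.
  by rewrite -mx_of_op_adj adjFx; apply/mapP; exists y; rewrite ?mem_enum.
have [P unitaryP diagP] := mx_simultaneous_unitary_diag commAs adjAs.
exists (op_of_mx (P^t*)).
  rewrite /is_unitary -op_of_mx_adj trmxCK -!op_of_mxM (unitarymxP unitaryP) op_of_mx1.
  by split => //; rewrite -[P^t*]mul1mx mulmxKtV // op_of_mx1.
move=> x i j neq_ij; have /is_diag_mxP diagPx := diagP _ (map_f (@mx_of_op I \o F) (mem_enum _ x)).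
rewrite -op_of_mx_adj trmxCK -(mx_of_opK (F x)) -!op_of_mxM /op_of_mx diagPx //.
by apply: contra neq_ij => /eqP/val_inj/enum_rank_inj ->.
Qed.

End SimultaneousDiagonalization.

Section TensorEntries.
Variables (R : realType) (I J K : finType).

Lemma tensl_mulE (X : op R I I) (P : op R (I * J)%type K) a r q :
  opmul (optens X (@opid R J)) P (a, r) q = \sum_b X a b * P (b, r) q.
Proof.
rewrite /opmul sum_pair; apply: eq_bigr => b _.
rewrite (big_only1 r) /optens /opid /= ?eqxx ?mulr1 // => t.
by rewrite eq_sym => /negbTE -> _; rewrite mulr0 mul0r.
Qed.

Lemma mul_tenslE (X : op R I I) (P : op R K (I * J)%type) p a s :
  opmul P (optens X (@opid R J)) p (a, s) = \sum_b P p (b, s) * X b a.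
Proof.
rewrite /opmul sum_pair; apply: eq_bigr => b _.
rewrite (big_only1 s) /optens /opid /= ?eqxx ?mulr1 // => t.
by move=> /negbTE -> _; rewrite !mulr0.
Qed.

Lemma tensr_mulE (Y : op R J J) (P : op R (I * J)%type K) a r q :
  opmul (optens (@opid R I) Y) P (a, r) q = \sum_t Y r t * P (a, t) q.
Proof.
rewrite /opmul sum_pair (big_only1 a) /optens /opid /=.
- by apply: eq_bigr => t _; rewrite eqxx mul1r.
- by [].
by move=> b neq_ba _; apply: big1 => t _; rewrite eq_sym (negbTE neq_ba) !mul0r.
Qed.

Lemma mul_tensrE (Y : op R J J) (P : op R K (I * J)%type) p a s :
  opmul P (optens (@opid R I) Y) p (a, s) = \sum_t P p (a, t) * Y t s.
Proof.
rewrite /opmul sum_pair (big_only1 a) /optens /opid /=.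
- by apply: eq_bigr => t _; rewrite eqxx mul1r.
- by [].
by move=> b neq_ba _; apply: big1 => t _; rewrite (negbTE neq_ba) mul0r mulr0.
Qed.

End TensorEntries.

Section SplittingMaps.
Variables (R : realType) (IH IL IR : finType) (chi : op R (IL * IR)%type IH).
Local Notation pi := (proj_chi chi).

Lemma opadj_proj_chi : opadj pi = pi.
Proof. by rewrite /proj_chi opadjM opadjK. Qed.

Definition pi_blockL r s : op R IL IL := fun a a' => pi (a, r) (a', s).
Definition pi_blockR a a' : op R IR IR := fun r s => pi (a, r) (a', s).

Lemma opadj_pi_blockL r s : opadj (pi_blockL r s) = pi_blockL s r.
Proof. by apply: opext => a a'; rewrite /pi_blockL /opadj -[in RHS]opadj_proj_chi. Qed.

Lemma opadj_pi_blockR a a' : opadj (pi_blockR a a') = pi_blockR a' a.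
Proof. by apply: opext => r s; rewrite /pi_blockR /opadj -[in RHS]opadj_proj_chi. Qed.

Lemma consL_commute_pi_blockL B r s :
  consL chi B -> opmul B (pi_blockL r s) = opmul (pi_blockL r s) B.
Proof.
move=> consB; apply: opext => a a'.
by have := congr1 (fun M => M (a, r) (a', s)) consB; rewrite /= tensl_mulE mul_tenslE.
Qed.

Lemma consR_commute_pi_blockR B a a' :
  consR chi B -> opmul B (pi_blockR a a') = opmul (pi_blockR a a') B.
Proof.
move=> consB; apply: opext => r s.
by have := congr1 (fun M => M (a, r) (a', s)) consB; rewrite /= tensr_mulE mul_tensrE.
Qed.

Lemma pi_blockL_simdiag : seteq (commutant (consL chi)) (centre (consL chi)) ->
  exists2 V : op R IL IL, is_unitary V &
    forall r s, is_diagonal (opmul (opmul (opadj V) (pi_blockL r s)) V).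
Proof.
move=> commutant_central.
have in_commutant r s : commutant (consL chi) (pi_blockL r s).
  by move=> B /consL_commute_pi_blockL ->.
have commute (p q : IR * IR) :
    opmul (pi_blockL p.1 p.2) (pi_blockL q.1 q.2) = opmul (pi_blockL q.1 q.2) (pi_blockL p.1 p.2).
  exact: in_commutant _ _ _ ((commutant_central _).1 (in_commutant p.1 p.2)).1.
have adj_closed (p : IR * IR) :
    exists q : IR * IR, opadj (pi_blockL p.1 p.2) = pi_blockL q.1 q.2.
  by exists (p.2, p.1); rewrite opadj_pi_blockL.
have [V unitaryV diagV] := simultaneous_unitary_diag commute adj_closed.
by exists V => // r s; apply: (diagV (r, s)).
Qed.

Lemma pi_blockR_simdiag : seteq (commutant (consR chi)) (centre (consR chi)) ->
  exists2 W : op R IR IR, is_unitary W &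
    forall a a', is_diagonal (opmul (opmul (opadj W) (pi_blockR a a')) W).
Proof.
move=> commutant_central.
have in_commutant a a' : commutant (consR chi) (pi_blockR a a').
  by move=> B /consR_commute_pi_blockR ->.
have commute (p q : IL * IL) :
    opmul (pi_blockR p.1 p.2) (pi_blockR q.1 q.2) = opmul (pi_blockR q.1 q.2) (pi_blockR p.1 p.2).
  exact: in_commutant _ _ _ ((commutant_central _).1 (in_commutant p.1 p.2)).1.
have adj_closed (p : IL * IL) :
    exists q : IL * IL, opadj (pi_blockR p.1 p.2) = pi_blockR q.1 q.2.
  by exists (p.2, p.1); rewrite opadj_pi_blockR.
have [W unitaryW diagW] := simultaneous_unitary_diag commute adj_closed.
by exists W => // a a'; apply: (diagW (a, a')).
Qed.

Lemma compress_mul (M N : op R (IL * IR)%type (IL * IR)%type) :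
  opmul (opmul (opmul (opadj chi) M) chi) (opmul (opmul (opadj chi) N) chi) =
  opmul (opmul (opadj chi) (opmul (opmul M pi) N)) chi.
Proof. by rewrite /proj_chi !opmulA. Qed.

Hypothesis chi_iso : is_isometry chi.

Lemma proj_chi_idem : opmul pi pi = pi.
Proof. by rewrite /proj_chi opmulA -(opmulA (opadj chi)) chi_iso opmul1l. Qed.

Lemma proj_chi_mul : opmul pi chi = chi.
Proof. by rewrite /proj_chi opmulA chi_iso opmul1r. Qed.

Lemma adj_mul_proj_chi : opmul (opadj chi) pi = opadj chi.
Proof. by rewrite /proj_chi -opmulA chi_iso opmul1l. Qed.

Lemma intertwineE A G :
    opmul A (opadj chi) = opmul (opadj chi) G -> opmul chi A = opmul G chi ->
  [/\ opmul (opmul chi A) (opadj chi) = opmul G pi,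
      opmul (opmul chi A) (opadj chi) = opmul pi G &
      A = opmul (opmul (opadj chi) G) chi].
Proof.
move=> AchiD chiA; split.
- by rewrite chiA opmulA.
- by rewrite opmulA AchiD -opmulA.
- by rewrite opmulA -chiA -opmulA chi_iso opmul1l.
Qed.

Lemma compress_intertwines G : opmul G pi = opmul pi G ->
  opmul (opmul (opmul (opadj chi) G) chi) (opadj chi) = opmul (opadj chi) G /\
  opmul chi (opmul (opmul (opadj chi) G) chi) = opmul G chi.
Proof.
move=> commG; split.
- by rewrite opmulA -/(proj_chi chi) opmulA commG -opmulA adj_mul_proj_chi.
- by rewrite -!opmulA -/(proj_chi chi) -commG opmulA proj_chi_mul.
Qed.

End SplittingMaps.

Section Rebase.
Variables (R : realType) (IH IL IR : finType) (V : op R IL IL) (W : op R IR IR).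
Local Notation idL := (@opid R IL).
Local Notation idR := (@opid R IR).
Local Notation VW := (optens V W).

Definition rebase (chi : op R (IL * IR)%type IH) := opmul (opadj VW) chi.

Lemma proj_rebase chi :
  proj_chi (rebase chi) = opmul (opmul (opadj VW) (proj_chi chi)) VW.
Proof. by rewrite /proj_chi /rebase opadjM opadjK !opmulA. Qed.

Lemma conj_tens_entry0L (M : op R (IL * IR)%type (IL * IR)%type) a a' r s :
    (forall t u, opmul (opmul (opadj V) (fun b b' => M (b, t) (b', u))) V a a' = 0) ->
  opmul (opmul (opadj VW) M) VW (a, r) (a', s) = 0.
Proof.
move=> blocks0.
have -> : opmul (opmul (opadj VW) M) VW = opmul (opmul (optens idL (opadj W))
    (opmul (opmul (optens (opadj V) idR) M) (optens V idR))) (optens idL W).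
  by rewrite opadj_tens [optens (opadj V) _]optens_factorr [VW]optens_factorl !opmulA.
rewrite mul_tensrE big1 // => u _; rewrite tensr_mulE big1 ?mul0r // => t _.
rewrite mul_tenslE; under eq_bigr do rewrite tensl_mulE.
by move: (blocks0 t u); rewrite /opmul /= => ->; rewrite mulr0.
Qed.

Lemma conj_tens_entry0R (M : op R (IL * IR)%type (IL * IR)%type) a a' r s :
    (forall b b', opmul (opmul (opadj W) (fun t u => M (b, t) (b', u))) W r s = 0) ->
  opmul (opmul (opadj VW) M) VW (a, r) (a', s) = 0.
Proof.
move=> blocks0.
have -> : opmul (opmul (opadj VW) M) VW = opmul (opmul (optens (opadj V) idR)
    (opmul (opmul (optens idL (opadj W)) M) (optens idL W))) (optens V idR).
  by rewrite opadj_tens [optens (opadj V) _]optens_factorl [VW]optens_factorr !opmulA.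
rewrite mul_tenslE big1 // => b' _; rewrite tensl_mulE big1 ?mul0r // => b _.
rewrite mul_tensrE; under eq_bigr do rewrite tensr_mulE.
by move: (blocks0 b b'); rewrite /opmul /= => ->; rewrite mulr0.
Qed.

Lemma proj_rebase_diagonal chi :
    (forall r s, is_diagonal (opmul (opmul (opadj V) (pi_blockL chi r s)) V)) ->
    (forall a a', is_diagonal (opmul (opmul (opadj W) (pi_blockR chi a a')) W)) ->
  is_diagonal (proj_chi (rebase chi)).
Proof.
move=> diagV diagW [a r] [a' s] neq; rewrite proj_rebase.
have [eq_aa'|neq_aa'] := eqVneq a a'.
- apply: conj_tens_entry0R => b b'; apply: diagW.
  by apply: contra neq => /eqP ->; rewrite eq_aa'.
- by apply: conj_tens_entry0L => t u; apply: diagV.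
Qed.

Hypotheses (unitaryV : is_unitary V) (unitaryW : is_unitary W).

Lemma rebaseK chi : opmul VW (rebase chi) = chi.
Proof. by rewrite /rebase -opmulA (unitary_tens unitaryV unitaryW).2 opmul1l. Qed.

Lemma rebase_isometry chi : is_isometry chi -> is_isometry (rebase chi).
Proof.
rewrite /is_isometry /rebase opadjM opadjK opmulA -(opmulA VW).
by rewrite (unitary_tens unitaryV unitaryW).2 opmul1l.
Qed.

Lemma conj_tensl X :
  opmul (opmul (opadj VW) (optens X idR)) VW = optens (opmul (opmul (opadj V) X) V) idR.
Proof. by rewrite opadj_tens !optensM opmul1r unitaryW.1. Qed.

Lemma conj_tensr Y :
  opmul (opmul (opadj VW) (optens idL Y)) VW = optens idL (opmul (opmul (opadj W) Y) W).
Proof. by rewrite opadj_tens !optensM opmul1r unitaryV.1. Qed.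

Lemma stlocL_rebase_sub chi A : stlocL chi A -> stlocL (rebase chi) A.
Proof.
have coisoVW := (unitary_tens unitaryV unitaryW).2.
move=> [At [AchiD chiA]]; exists (opmul (opmul (opadj V) At) V).
rewrite -conj_tensl /rebase; split.
- by rewrite opadjM opadjK -opmulA AchiD !opmulA -(opmulA VW) coisoVW opmul1l.
- by rewrite opmulA chiA !opmulA -(opmulA VW) coisoVW opmul1l.
Qed.

Lemma stlocR_rebase_sub chi A : stlocR chi A -> stlocR (rebase chi) A.
Proof.
have coisoVW := (unitary_tens unitaryV unitaryW).2.
move=> [Bt [AchiD chiA]]; exists (opmul (opmul (opadj W) Bt) W).
rewrite -conj_tensr /rebase; split.
- by rewrite opadjM opadjK -opmulA AchiD !opmulA -(opmulA VW) coisoVW opmul1l.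
- by rewrite opmulA chiA !opmulA -(opmulA VW) coisoVW opmul1l.
Qed.

End Rebase.

Section RebaseInvariance.
Variables (R : realType) (IH IL IR : finType) (V : op R IL IL) (W : op R IR IR).
Variable chi : op R (IL * IR)%type IH.
Hypotheses (unitaryV : is_unitary V) (unitaryW : is_unitary W).

Lemma rebase_adjK : rebase (opadj V) (opadj W) (rebase V W chi) = chi.
Proof. by rewrite {1}/rebase -opadj_tens opadjK rebaseK. Qed.

Lemma stlocL_rebase : stlocL (rebase V W chi) = stlocL chi.
Proof.
apply: boolp.funext => A; apply: boolp.propext; split; last exact: stlocL_rebase_sub.
rewrite -{2}rebase_adjK; apply: stlocL_rebase_sub; exact: unitary_adj.
Qed.

Lemma stlocR_rebase : stlocR (rebase V W chi) = stlocR chi.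
Proof.
apply: boolp.funext => A; apply: boolp.propext; split; last exact: stlocR_rebase_sub.
rewrite -{2}rebase_adjK; apply: stlocR_rebase_sub; exact: unitary_adj.
Qed.

End RebaseInvariance.

Section DiagonalSplitting.
Variables (R : realType) (IH IL IR : finType) (chi : op R (IL * IR)%type IH).
Hypotheses (chi_iso : is_isometry chi) (pi_diag : is_diagonal (proj_chi chi)).
Local Notation C := (R[i]).
Local Notation pi := (proj_chi chi).
Local Notation idL := (@opid R IL).
Local Notation idR := (@opid R IR).

Definition supp (p : IL * IR) : bool := pi p p == 1.

Lemma proj_chi_diagE p q : pi p q = (p == q)%:R * (supp p)%:R.
Proof.
have [<-|neq_pq] := eqVneq p q; last by rewrite pi_diag // mul0r.
by rewrite mul1r {1}(diagonal_idem_entry pi_diag (proj_chi_idem chi_iso)).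
Qed.

Lemma proj_chi_mull (K : finType) (M : op R (IL * IR)%type K) p q :
  opmul pi M p q = (supp p)%:R * M p q.
Proof.
rewrite /opmul (big_only1 p) ?proj_chi_diagE ?eqxx ?mul1r // => p' neq_p'p _.
by rewrite proj_chi_diagE eq_sym (negbTE neq_p'p) !mul0r.
Qed.

Lemma proj_chi_mulr (K : finType) (M : op R K (IL * IR)%type) p q :
  opmul M pi p q = M p q * (supp q)%:R.
Proof.
rewrite /opmul (big_only1 q) ?proj_chi_diagE ?eqxx ?mul1r // => q' neq_q'q _.
by rewrite proj_chi_diagE (negbTE neq_q'q) !mul0r mulr0.
Qed.

Lemma chi_supp0 p h : ~~ supp p -> chi p h = 0.
Proof. by move=> /negbTE nsupp; rewrite -(proj_chi_mul chi_iso) proj_chi_mull nsupp mul0r. Qed.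

Definition row_supp a : {set IR} := [set r | supp (a, r)].

Lemma tensl_commute_supp X a a' r :
    opmul (optens X idR) pi = opmul pi (optens X idR) ->
  X a a' * (supp (a', r))%:R = (supp (a, r))%:R * X a a'.
Proof.
move/(congr1 (fun M => M (a, r) (a', r))).
by rewrite /= proj_chi_mulr proj_chi_mull /optens /opid /= eqxx mulr1.
Qed.

Lemma tensr_commute_supp Y a r s :
    opmul (optens idL Y) pi = opmul pi (optens idL Y) ->
  Y r s * (supp (a, s))%:R = (supp (a, r))%:R * Y r s.
Proof.
move/(congr1 (fun M => M (a, r) (a, s))).
by rewrite /= proj_chi_mulr proj_chi_mull /optens /opid /= eqxx mul1r.
Qed.

Lemma tensl_commute_block X a a' :
    opmul (optens X idR) pi = opmul pi (optens X idR) ->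
  row_supp a != row_supp a' -> X a a' = 0.
Proof.
move=> commX; apply: contraNeq => nzX; apply/eqP/setP => r; rewrite !inE.
have := tensl_commute_supp a a' r commX.
by case: (supp (a, r)); case: (supp (a', r)); rewrite //= ?mulr0 ?mulr1 ?mul0r ?mul1r;
  move/eqP; rewrite ?(negbTE nzX) // eq_sym (negbTE nzX).
Qed.

Definition class_unit a r r' : op R (IL * IR)%type (IL * IR)%type :=
  optens (fun b b' => (b == b')%:R * (row_supp b == row_supp a)%:R)
         (fun t u => (t == r)%:R * (u == r')%:R).

Section ClassUnit.
Variables (a : IL) (r r' : IR).
Hypotheses (supp_ar : supp (a, r)) (supp_ar' : supp (a, r')).
Local Notation Z := (class_unit a r r').

Lemma class_unit_supp p q : Z p q != 0 -> supp p && supp q.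
Proof.
case: p q => [b t] [b' u]; rewrite /class_unit /optens /=.
have [<-|] := eqVneq b b'; last by rewrite !mul0r eqxx.
have [->|] := eqVneq t r; last by rewrite mul0r mulr0 eqxx.
have [->|] := eqVneq u r'; last by rewrite !mulr0 eqxx.
have [/setP row_ba|] := eqVneq (row_supp b) (row_supp a); last by rewrite mulr0 mul0r eqxx.
by move=> _; move: (row_ba r) (row_ba r'); rewrite !inE supp_ar supp_ar' => -> ->.
Qed.

Lemma proj_chi_class_unit : opmul pi Z = Z /\ opmul Z pi = Z.
Proof.
split; apply: opext => p q; [rewrite proj_chi_mull | rewrite proj_chi_mulr];
  have [->|/class_unit_supp/andP[supp_p supp_q]] := eqVneq (Z p q) 0;
  by rewrite ?mulr0 ?mul0r ?supp_p ?supp_q ?mulr1 ?mul1r.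
Qed.

Lemma class_unit_commute_tensl X :
    (forall b b', row_supp b != row_supp b' -> X b b' = 0) ->
  opmul (optens X idR) Z = opmul Z (optens X idR).
Proof.
move=> blockX; rewrite /class_unit !optensM opmul1l opmul1r; congr optens.
apply: opext => b b'; rewrite /opmul (big_only1 b') ?(big_only1 b) ?eqxx ?mul1r //.
- have [->|neq_bb'] := eqVneq (row_supp b) (row_supp b'); first by rewrite mulrC.
  by rewrite blockX // mul0r mulr0.
- by move=> c /negbTE neq_cb _; rewrite eq_sym neq_cb !mul0r.
- by move=> c /negbTE neq_cb' _; rewrite neq_cb' mul0r mulr0.
Qed.

Lemma class_unit_commutant :
  commutant (stlocL chi) (opmul (opmul (opadj chi) Z) chi).
Proof.
move=> A [At [AchiD chiA]]; have [Api piA ->] := intertwineE chi_iso AchiD chiA.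
have blockAt := tensl_commute_block (etrans (esym Api) piA).
have [piZ Zpi] := proj_chi_class_unit.
by rewrite !compress_mul (opmulA _ pi) piZ Zpi class_unit_commute_tensl.
Qed.

End ClassUnit.

Hypothesis chi_bal : balanced chi.

(* If (a', r') were outside the support, the compression of [class_unit a r r']
   would commute with stloc_L, hence be right local by balancedness; the row a'
   forces its right symbol to vanish at (r, r'), while the row a needs 1 there. *)
Lemma supp_rect a a' r r' :
  supp (a, r) -> supp (a', r) -> supp (a, r') -> supp (a', r').
Proof.
move=> supp_ar supp_a'r supp_ar'; apply/negPn/negP => nsupp_a'r'.
have [Bt [ZchiD chiZ]] := (chi_bal _).2 (class_unit_commutant supp_ar supp_ar').
have [Zpi piZ _] := intertwineE chi_iso ZchiD chiZ.
have [piZt Ztpi] := proj_chi_class_unit supp_ar supp_ar'.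
have compressK : opmul (opmul chi (opmul (opmul (opadj chi) (class_unit a r r')) chi))
    (opadj chi) = class_unit a r r'.
  by rewrite -{2}Ztpi -{2}piZt /proj_chi !opmulA.
rewrite compressK in Zpi piZ.
have := tensr_commute_supp a' r r' (etrans (esym Zpi) piZ).
rewrite (negbTE nsupp_a'r') supp_a'r mulr0 mul1r => /esym Bt0.
move/(congr1 (fun M => M (a, r) (a, r'))): Zpi.
rewrite /= proj_chi_mulr supp_ar' /class_unit /optens /opid /= !eqxx Bt0.
by rewrite !mul1r mul0r => /eqP; rewrite oner_eq0.
Qed.

Lemma row_supp_eq a a' r : supp (a, r) -> supp (a', r) -> row_supp a = row_supp a'.
Proof.
move=> supp_ar supp_a'r; apply/setP => r'; rewrite !inE.
by apply/idP/idP; [exact: supp_rect supp_ar supp_a'r | exact: supp_rect supp_a'r supp_ar].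
Qed.

Definition suppL a : bool := row_supp a != set0.
Definition suppR r : bool := [exists a, supp (a, r)].
Local Notation JL := {a : IL | suppL a}.
Local Notation JR := {r : IR | suppR r}.

(* The blocks k are the distinct nonempty row supports. *)
Definition row_class (k : {set IR}) : bool := [exists j : JL, row_supp (val j) == k].
Local Notation K := {k : {set IR} | row_class k}.

Lemma row_class_supp (j : JL) : row_class (row_supp (val j)).
Proof. by apply/existsP; exists j. Qed.

Definition classL (j : JL) : K := Sub (row_supp (val j)) (row_class_supp j).

Lemma classL_eq j j' : (classL j == classL j') = (row_supp (val j) == row_supp (val j')).
Proof. by rewrite -val_eqE. Qed.

Definition row_witness (r : JR) : IL := xchoose (existsP (valP r)).

Lemma supp_row_witness r : supp (row_witness r, val r).
Proof. exact: xchooseP (existsP (valP r)). Qed.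

Lemma suppL_supp a r : supp (a, r) -> suppL a.
Proof. by move=> supp_ar; apply/set0Pn; exists r; rewrite inE. Qed.

Definition classR (r : JR) : K := classL (Sub (row_witness r) (suppL_supp (supp_row_witness r))).

Lemma classLR_eq j k : (classL j == classR k) = supp (val j, val k).
Proof.
rewrite /classR classL_eq /=; apply/eqP/idP => [eq_rows|supp_jk].
  have : val k \in row_supp (row_witness k) by rewrite inE supp_row_witness.
  by rewrite -eq_rows inE.
exact: row_supp_eq supp_jk (supp_row_witness k).
Qed.

Local Notation blkT := (blk classL classR).

Definition blk_pair (b : blkT) : IL * IR := (val (val b).1, val (val b).2).

Lemma supp_blk_pair b : supp (blk_pair b).
Proof. by rewrite /blk_pair -classLR_eq; exact: (valP b). Qed.

Lemma blk_pair_inj : injective blk_pair.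
Proof.
move=> [[j k] ?] [[j' k'] ?] [/= eq_j eq_k]; apply: val_inj => /=.
by congr pair; apply: val_inj.
Qed.

Definition chi_blk : op R blkT IH := fun b h => chi (blk_pair b) h.
Definition chi_canon : op R (JL * JR)%type IH :=
  opmul (@incl R _ _ _ classL classR) chi_blk.

Lemma chi_canonE q h : chi_canon q h = chi (val q.1, val q.2) h.
Proof.
rewrite /chi_canon /opmul /incl; have [blk_q|nblk_q] := boolP (blk_pred classL classR q).
  rewrite (big_only1 (Sub q blk_q)) ?SubK ?eqxx ?mul1r // => b neq_b _.
  case: eqP => [eq_qb|]; rewrite ?mul0r //; case/eqP: neq_b.
  by apply: val_inj; rewrite SubK.
rewrite big1 => [|b _]; first by rewrite chi_supp0 // -classLR_eq.
case: eqP => [eq_qb|]; rewrite ?mul0r //.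
by case/negP: nblk_q; rewrite eq_qb; exact: valP b.
Qed.

Lemma sum_suppLR (F : IL -> IR -> C) : (forall a r, ~~ supp (a, r) -> F a r = 0) ->
  \sum_(q : (JL * JR)%type) F (val q.1) (val q.2) = \sum_a \sum_r F a r.
Proof.
move=> F0; rewrite sum_pair (sum_sub_supp (P := suppL) (F := fun a => \sum_(k : JR) F a (val k))).
  apply: eq_bigr => a _; apply: (sum_sub_supp (P := suppR) (F := F a)) => r /existsPn nsupp_r.
  exact: F0 (nsupp_r a).
move=> a nsuppL_a; apply: big1 => k _; apply: F0.
by apply: contra nsuppL_a; exact: suppL_supp.
Qed.

Lemma sum_blk (F : IL * IR -> C) : (forall p, ~~ supp p -> F p = 0) ->
  \sum_(b : blkT) F (blk_pair b) = \sum_p F p.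
Proof.
move=> F0; rewrite (sum_sub_supp (P := blk_pred classL classR)
  (F := fun q : JL * JR => F (val q.1, val q.2))) => [|q]; last first.
  by rewrite /blk_pred classLR_eq => /F0.
by rewrite (sum_suppLR (F := fun a r => F (a, r))) ?sum_pair // => a r /F0.
Qed.

Lemma chi_factor : chi = opmul (optens (sub_incl suppL) (sub_incl suppR)) chi_canon.
Proof.
apply: opext => -[a r] h; rewrite /opmul; under eq_bigr do rewrite chi_canonE.
rewrite (sum_suppLR (F := fun b t => (a == b)%:R * (r == t)%:R * chi (b, t) h)); last first.
  by move=> b t /chi_supp0 ->; rewrite mulr0.
rewrite (big_only1 a) //; last first.
  by move=> b /negbTE neq_ba _; apply: big1 => t _; rewrite eq_sym neq_ba !mul0r.
rewrite (big_only1 r) //; last by move=> t /negbTE neq_tr _; rewrite eq_sym neq_tr mulr0 mul0r.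
by rewrite !eqxx !mul1r.
Qed.

Lemma unitary_chi_blk : is_unitary chi_blk.
Proof.
split; apply: opext; last move=> b b'.
  move=> h h'; rewrite -[RHS](congr1 (fun M => M h h') chi_iso) /opmul /opadj /chi_blk.
  rewrite (sum_blk (F := fun p => (chi p h)^* * chi p h')) // => p /chi_supp0 ->.
  by rewrite conjC0 mul0r.
have -> : opmul chi_blk (opadj chi_blk) b b' = pi (blk_pair b) (blk_pair b') by [].
by rewrite proj_chi_diagE (inj_eq blk_pair_inj) supp_blk_pair mulr1.
Qed.

Lemma nondeg_classes : nondeg_blocks classL classR.
Proof.
move=> [k class_k]; have /existsP[j /eqP row_j] := class_k.
split; first by exists j; apply: val_inj.
have [r] : exists r, r \in row_supp (val j) by apply/set0Pn; exact: valP j.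
rewrite inE => supp_jr.
have suppR_r : suppR r by apply/existsP; exists (val j).
exists (Sub r suppR_r); apply: val_inj => /=; rewrite -row_j.
exact: row_supp_eq (supp_row_witness (Sub r suppR_r)) supp_jr.
Qed.

Lemma conj_chi_blk_stlocL A At :
    opmul A (opadj chi) = opmul (opadj chi) (optens At idR) ->
    opmul chi A = opmul (optens At idR) chi ->
  opmul (opmul chi_blk A) (opadj chi_blk) = blk_tens_id (fun j j' : JL => At (val j) (val j')).
Proof.
move=> AchiD chiA; have [Api _ _] := intertwineE chi_iso AchiD chiA.
apply: opext => b b'.
have -> : opmul (opmul chi_blk A) (opadj chi_blk) b b' =
  opmul (opmul chi A) (opadj chi) (blk_pair b) (blk_pair b') by [].
by rewrite Api proj_chi_mulr supp_blk_pair mulr1 /optens /opid /blk_tens_id /= val_eqE.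
Qed.

Definition extendL (X : op R JL JL) : op R IL IL := fun a a' =>
  if insub a is Some j then if insub a' is Some j' then X j j' else 0 else 0.

Lemma extendL_val X j j' : extendL X (val j) (val j') = X j j'.
Proof. by rewrite /extendL !valK. Qed.

Lemma extendL_commute_proj X : blockdiagL classL X ->
  opmul (optens (extendL X) idR) pi = opmul pi (optens (extendL X) idR).
Proof.
move=> blockX; apply: opext => -[a r] [a' s].
rewrite proj_chi_mull proj_chi_mulr /optens /opid /=.
have [<-|neq_rs] := eqVneq r s; last by rewrite !mulr0 mul0r.
rewrite mulr1 /extendL; case: insubP => [j _ <-|]; last by rewrite mul0r mulr0.
case: insubP => [j' _ <-|]; last by rewrite mul0r mulr0.
have [eq_cl|neq_cl] := eqVneq (classL j) (classL j'); last by rewrite blockX // mul0r mulr0.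
by move/eqP: eq_cl; rewrite classL_eq => /eqP/setP/(_ r); rewrite !inE => ->; rewrite mulrC.
Qed.

Lemma blk_algebra_stlocL X : blockdiagL classL X ->
  exists2 A, stlocL chi A & blk_tens_id X = opmul (opmul chi_blk A) (opadj chi_blk).
Proof.
move=> blockX; have [AchiD chiA] := compress_intertwines chi_iso (extendL_commute_proj blockX).
exists (opmul (opmul (opadj chi) (optens (extendL X) idR)) chi); first by exists (extendL X).
rewrite (conj_chi_blk_stlocL AchiD chiA); congr blk_tens_id.
by apply: opext => j j'; rewrite extendL_val.
Qed.

Lemma representation_unitary_chi_blk : representation_unitary (stlocL chi) chi_blk.
Proof.
split; first exact: nondeg_classes.
split => [|Y]; first exact: unitary_chi_blk.
split => [[A [[At [AchiD chiA]] ->]]|[X [blockX ->]]].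
  exists (fun j j' : JL => At (val j) (val j')); split; last exact: conj_chi_blk_stlocL.
  have [Api piA _] := intertwineE chi_iso AchiD chiA.
  by move=> j j'; rewrite classL_eq => /(tensl_commute_block (etrans (esym Api) piA)).
by have [A stA ->] := blk_algebra_stlocL blockX; exists A.
Qed.

Lemma canonical_chi_canon : canonical_splitting_map (stlocL chi) chi_canon.
Proof.
by exists _, classL, classR, chi_blk; split; first exact: representation_unitary_chi_blk.
Qed.

End DiagonalSplitting.

Arguments chi_canon {R IH IL IR} chi _ _.

Theorem mainTheorem16 (R : realType) (IH IL IR : finType)
    (chi : op R (IL * IR)%type IH) :
  splitting_map chi -> lean chi ->
  exists (JL JR : finType) (zeta : op R (JL * JR)%type IH)
         (UL : op R IL JL) (UR : op R IR JR),
    canonical_splitting_map (stlocL chi) zeta /\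
    is_isometry UL /\ is_isometry UR /\
    chi = opmul (optens UL UR) zeta.
Proof.
move=> chi_iso [chi_bal consL_central consR_central].
have [V unitaryV diagV] := pi_blockL_simdiag consL_central.
have [W unitaryW diagW] := pi_blockR_simdiag consR_central.
pose chiD := rebase V W chi.
have chiD_iso : is_isometry chiD := rebase_isometry unitaryV unitaryW chi_iso.
have piD_diag : is_diagonal (proj_chi chiD) := proj_rebase_diagonal diagV diagW.
have chiD_bal : balanced chiD by rewrite /balanced stlocL_rebase ?stlocR_rebase.
exists _, _, (chi_canon chiD),
  (opmul V (sub_incl (suppL chiD))), (opmul W (sub_incl (suppR chiD))).
split.
  rewrite -(stlocL_rebase chi unitaryV unitaryW).
  exact: canonical_chi_canon chiD_iso piD_diag chiD_bal.
split; first exact: isometry_mul unitaryV.1 (sub_incl_isometry _ _).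
split; first exact: isometry_mul unitaryW.1 (sub_incl_isometry _ _).
by rewrite -optensM opmulA -(chi_factor chiD_iso piD_diag chiD_bal) rebaseK.
Qed.
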